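(* Let $G=(V,E,w)$ be a connected weighted multigraph, let $S\subseteq V$, and let $\psi=\max_{v\in V}d(v,S)$. Then for every $x\in S$ and every $l\ge0$, \[ \mathrm{rad}_{C_S(l,x)}(x)\le \psi+2l, \] i.e. every vertex of $C_S(l,x)$ is within distance $\psi+2l$ of $x$ in the subgraph induced by $C_S(l,x)$.
   Context: Edge lengths are $d(e)=1/w(e)$; $d(u,S)$ is the shortest-path distance in $G$ from $u$ to $S$. $F(S)=\{(u\to v): (u,v)\in E,\ d(u,S)+d(u,v)=d(v,S)\}$ is the set of (directed) forward edges induced by $S$. The cone $C_S(l,x)$ is the set of vertices reachable from $x$ by a path in $G$ such that the sum of the lengths of traversed edges that are not traversed as forward edges of $F(S)$ is at most $l$. For $U\subseteq V$, $\mathrm{rad}_U(x)$ is the smallest $r$ such that every vertex of $U$ is within distance $r$ of $x$ in the induced subgraph $G(U)$. *)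

From HB Require Import structures.
From mathcomp Require Import all_boot all_order all_algebra.
From mathcomp Require Import boolp classical_sets reals.
Set Implicit Arguments. Unset Strict Implicit. Unset Printing Implicit Defensive.
Import Order.TTheory GRing.Theory Num.Theory.
Local Open Scope ring_scope.
Local Open Scope classical_set_scope.

Section Graph.
Variables (R : realType) (V E : finType) (src tgt : E -> V) (w : E -> R).

(* A step is an edge together with a traversal direction:
   (e, true) goes src e -> tgt e, (e, false) goes tgt e -> src e. *)
Definition step_tail (s : E * bool) : V := if s.2 then src s.1 else tgt s.1.
Definition step_head (s : E * bool) : V := if s.2 then tgt s.1 else src s.1.

Definition elen (e : E) : R := (w e)^-1.

Fixpoint walk (x : V) (p : seq (E * bool)) (y : V) : Prop :=
  match p with
  | [::] => x = y
  | s :: p' => step_tail s = x /\ walk (step_head s) p' y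
  end.

Definition wlen (p : seq (E * bool)) : R := \sum_(s <- p) elen s.1.

Definition dist (u v : V) : R :=
  inf [set wlen p | p in [set p | walk u p v]].

Definition distS (S : {set V}) (u : V) : R :=
  inf [set wlen p | p in [set p | exists2 v, v \in S & walk u p v]].

Definition psi (S : {set V}) : R := \big[Num.max/0]_(v : V) distS S v.

(* the step s is traversed as a forward edge of F(S), i.e. as
   (u -> v) with d(u,S) + d(e) = d(v,S) *)
Definition forward_step (S : {set V}) (s : E * bool) : Prop :=
  distS S (step_tail s) + elen s.1 = distS S (step_head s).

Definition nonforward_len (S : {set V}) (p : seq (E * bool)) : R :=
  \sum_(s <- p) (if `[< forward_step S s >] then 0 else elen s.1).

Definition cone (S : {set V}) (l : R) (x : V) : set V :=
  [set v | exists p, walk x p v /\ nonforward_len S p <= l].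

Fixpoint walk_in (U : set V) (x : V) (p : seq (E * bool)) (y : V) : Prop :=
  match p with
  | [::] => U x /\ x = y
  | s :: p' => U x /\ step_tail s = x /\ walk_in U (step_head s) p' y
  end.

Definition connected_graph : Prop := forall u v : V, exists p, walk u p v.

End Graph.

(* Along a walk, a step traversed as a forward edge of F(S) raises d(., S) by
   exactly its length, and any other step lowers d(., S) by at most its length
   (triangle inequality).  Hence a walk from a to b has length at most
   d(b, S) - d(a, S) + 2 * (its non-forward length).  A walk from x in S
   witnessing v in C_S(l, x) therefore has length at most d(v, S) + 2 l
   <= psi + 2 l, and it stays in the cone since each of its prefixes has
   non-forward length at most l. *)
From mathcomp Require Import all_boot all_order all_algebra.
From mathcomp Require Import boolp classical_sets reals.
From mathcomp Require Import lra.
Set Implicit Arguments. Unset Strict Implicit. Unset Printing Implicit Defensive.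
Import Order.TTheory GRing.Theory Num.Theory.
Local Open Scope ring_scope.

Section WalkLengths.
Variables (R : realType) (V E : finType) (src tgt : E -> V) (w : E -> R).
Hypothesis w_gt0 : forall e, 0 < w e.

Local Notation walk := (walk src tgt).
Local Notation step_tail := (step_tail src tgt).
Local Notation step_head := (step_head src tgt).
Local Notation distS := (distS src tgt w).
Local Notation nonforward_len := (nonforward_len src tgt w).

Lemma elen_gt0 e : 0 < elen w e.
Proof. by rewrite invr_gt0. Qed.

Lemma wlen_cons s p : wlen w (s :: p) = elen w s.1 + wlen w p.
Proof. exact: big_cons. Qed.

Lemma wlen_ge0 p : 0 <= wlen w p.
Proof. by apply: sumr_ge0 => s _; apply/ltW/elen_gt0. Qed.

Lemma nonforward_len_cons S s p : nonforward_len S (s :: p) =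
  (if `[< forward_step src tgt w S s >] then 0 else elen w s.1)
  + nonforward_len S p.
Proof. exact: big_cons. Qed.

Lemma nonforward_len_cat S p q :
  nonforward_len S (p ++ q) = nonforward_len S p + nonforward_len S q.
Proof. exact: big_cat. Qed.

Lemma nonforward_len_ge0 S p : 0 <= nonforward_len S p.
Proof.
by apply: sumr_ge0 => s _; case: ifP => // _; apply/ltW/elen_gt0.
Qed.

Lemma walk_cat x p a q y : walk x p a -> walk a q y -> walk x (p ++ q) y.
Proof.
elim: p x => [|s p IHp] x /=; first by move=> ->.
by move=> [tail_s walk_p] walk_q; split => //; apply: IHp.
Qed.

Section DistanceToS.
Variable S : {set V}.
Hypothesis S_reachable : forall u, exists2 y, y \in S & exists p, walk u p y.

Lemma distS_le_wlen u p y : y \in S -> walk u p y -> distS S u <= wlen w p.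
Proof.
move=> yS walk_p; apply: ge_inf; last by exists p => //; exists y.
by exists 0 => _ [q _ <-]; apply: wlen_ge0.
Qed.

Lemma distS_ge0 u : 0 <= distS S u.
Proof.
have [y yS [p walk_p]] := S_reachable u.
apply: lb_le_inf; first by exists (wlen w p); exists p => //; exists y.
by move=> _ [q _ <-]; apply: wlen_ge0.
Qed.

Lemma distS_eq0 u : u \in S -> distS S u = 0.
Proof.
move=> uS; apply/eqP; rewrite eq_le distS_ge0 andbT.
by have := distS_le_wlen (p := [::]) uS erefl; rewrite /wlen big_nil.
Qed.

Lemma distS_step s : distS S (step_tail s) <= elen w s.1 + distS S (step_head s).
Proof.
have [y yS [p walk_p]] := S_reachable (step_head s).
rewrite -lerBlDl; apply: lb_le_inf.
  by exists (wlen w p); exists p => //; exists y.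
move=> _ [q [z zS walk_q] <-]; rewrite lerBlDl -wlen_cons.
by apply: (distS_le_wlen zS); split.
Qed.

Lemma wlen_walk_le a q b : walk a q b ->
  wlen w q + distS S a <= distS S b + 2 * nonforward_len S q.
Proof.
elim: q a => [|s q IHq] a /= => [<-|[tail_s walk_q]].
  by rewrite /wlen /nonforward_len !big_nil add0r mulr0 addr0.
have := IHq _ walk_q; rewrite wlen_cons nonforward_len_cons mulrDr.
case: asboolP => [forward_s | _].
  by move: forward_s; rewrite /forward_step tail_s mulr0 add0r; lra.
by have := distS_step s; rewrite tail_s; lra.
Qed.

End DistanceToS.

Lemma distS_le_psi S v : distS S v <= psi src tgt w S.
Proof. exact: (le_bigmax _ (distS S) v). Qed.

Lemma walk_in_cone_suffix S l x p a q v :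
  walk x p a -> walk a q v -> nonforward_len S (p ++ q) <= l ->
  walk_in src tgt (cone src tgt w S l x) a q v.
Proof.
elim: q a p => [|s q IHq] a p walk_p /= => [<-|[tail_s walk_q]] nf_le.
  by split => //; exists p; rewrite cats0 in nf_le.
have a_in_cone : cone src tgt w S l x a.
  exists p; split => //; apply: le_trans nf_le.
  by rewrite nonforward_len_cat lerDl nonforward_len_ge0.
split; [done | split; [done | apply: (IHq _ (rcons p s))]] => //.
- by rewrite -cats1; apply: walk_cat walk_p _; rewrite /= -tail_s.
- by rewrite cat_rcons.
Qed.

Lemma walk_in_cone S l x p v :
  walk x p v -> nonforward_len S p <= l ->
  walk_in src tgt (cone src tgt w S l x) x p v.
Proof. exact: (walk_in_cone_suffix (p := [::])). Qed.

End WalkLengths.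

Theorem mainTheorem7 (R : realType) (V E : finType) (src tgt : E -> V)
  (w : E -> R) (w_pos : forall e, 0 < w e)
  (Gconn : connected_graph src tgt)
  (S : {set V}) (x : V) (xS : x \in S) (l : R) (l_ge0 : 0 <= l) :
  forall v, cone src tgt w S l x v ->
    exists p, walk_in src tgt (cone src tgt w S l x) x p v /\
              wlen w p <= psi src tgt w S + 2 * l.
Proof.
move=> v [p [walk_p nf_le]]; exists p; split; first exact: walk_in_cone.
have S_reachable u : exists2 y, y \in S & exists q, walk src tgt u q y.
  by exists x => //; apply: Gconn.
have := wlen_walk_le w_pos S_reachable walk_p.
rewrite (distS_eq0 w_pos S_reachable xS) addr0 => /le_trans; apply.
by rewrite lerD ?distS_le_psi ?ler_pM2l.
Qed.
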